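(* Consider the multicast coalitional game with player set $\mathcal{N}$ and value function $$v(S)=\sum_{i\in S}U_i-\sum_{i\in S}\frac{\alpha_i}{R_S}-\frac{\beta+\gamma}{R_S},\qquad R_S=\min_{i\in S}R_i,$$ for nonempty $S\subseteq\mathcal{N}$, with the convention $v(\emptyset)=0$. Let $\mathbf{P}=\{P_1,\dots,P_n\}$ be a partition of $\mathcal{N}$ into nonempty sets, with $R_{i,min}$, $R_{i,max}$ the minimum and maximum rates of users in $P_i$, ordered as $R_{1,min}\le R_{1,max}\le R_{2,min}\le\dots\le R_{n,min}\le R_{n,max}$. Let $\alpha_{min}=\min_{i\in\mathcal{N}}\alpha_i$. If $$\frac{R_{i+1,min}}{R_{i,max}}\ge\frac{\alpha_{min}+\beta+\gamma}{\alpha_{min}}\quad\forall i\in\{1,\dots,n-1\},$$ then for every $\mathbf{P}$-incompatible coalition $S$ (i.e. nonempty $S\subseteq\mathcal{N}$ with $S\not\subseteq P_i$ for all $i$), $$\sum_{i=1}^nv(S\cap P_i)\ge v(S).$$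
   Context: A transmitter multicasts a file of size $X>0$ bits to users $\mathcal{N}=\{1,\dots,N\}$. User $i$ has valuation $U_i\in\mathbb{R}$, downloads at rate $R_i>0$, and consumes receive power $P_{Rx,i}>0$; the transmitter transmits at power $P_{Tx}>0$. Costs per unit energy are $a>0$ at users and $b>0$ at the transmitter; bandwidth cost per second is $w>0$. Set $\alpha_i=aP_{Rx,i}X$, $\beta=bP_{Tx}X$, $\gamma=wX$. *)

From mathcomp Require Import all_boot all_order all_algebra.
Set Implicit Arguments. Unset Strict Implicit. Unset Printing Implicit Defensive.
Import Order.TTheory GRing.Theory Num.Theory.
Local Open Scope ring_scope.

Section Multicast.
Variables (K : realFieldType) (T : finType).

(* minimum / maximum of f over a set S (0 on the empty set, never used there) *)
Definition minf (f : T -> K) (S : {set T}) : K :=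
  match [pick i in S] with
  | Some i0 => \big[Num.min/f i0]_(j in S) f j
  | None => 0
  end.

Definition maxf (f : T -> K) (S : {set T}) : K :=
  match [pick i in S] with
  | Some i0 => \big[Num.max/f i0]_(j in S) f j
  | None => 0
  end.

Definition mc_value (U Rt alpha : T -> K) (beta gamma : K) (S : {set T}) : K :=
  if S == set0 then 0
  else \sum_(i in S) U i - \sum_(i in S) alpha i / minf Rt S
       - (beta + gamma) / minf Rt S.

End Multicast.

(* The cheapest member of [S] (rate [R_S]) lies in a single block [P k0], and the
   block [S ∩ P k0] keeps the rate [R_S], so it can absorb the transmitter cost
   [β + γ] exactly as [S] does.  Every other nonempty block [S ∩ P k] lies in a
   higher block of the partition (blocks are ordered by rate), so by the gap
   condition its rate is at least [ρ R_S] with [ρ = (α_min + β + γ) / α_min]; at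
   such a rate its own transmitter cost [β + γ] is paid for by what its users
   save in receive energy compared with downloading at rate [R_S]. *)

From mathcomp Require Import all_boot all_order all_algebra.
From mathcomp Require Import lra.
Import Order.TTheory GRing.Theory Num.Theory.
Local Open Scope ring_scope.

Set Implicit Arguments.
Unset Strict Implicit.
Unset Printing Implicit Defensive.

Section MinMax.
Variables (K : realFieldType) (T : finType) (f : T -> K).
Implicit Types (S : {set T}) (i : T).

Lemma minf_le S i : i \in S -> minf f S <= f i.
Proof.
move=> iS; rewrite /minf; case: pickP => [i0 _|S0]; last by rewrite S0 in iS.
exact: bigmin_le_cond.
Qed.

Lemma le_maxf S i : i \in S -> f i <= maxf f S.
Proof.
move=> iS; rewrite /maxf; case: pickP => [i0 _|S0]; last by rewrite S0 in iS.
exact: le_bigmax_cond.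
Qed.

Lemma minf_eq S i : i \in S -> {in S, forall j, f i <= f j} -> minf f S = f i.
Proof.
move=> iS imin; apply/le_anti; rewrite minf_le //= /minf.
case: pickP => [i0 i0S|S0]; last by rewrite S0 in iS.
by apply/bigmin_geP; split; [exact: imin | exact: imin].
Qed.

Lemma eq_minf S : S != set0 -> exists2 i, i \in S & minf f S = f i.
Proof.
case/set0Pn=> j jS; case: (arg_minP f jS) => i iS imin.
by exists i; last exact: minf_eq.
Qed.

End MinMax.

Lemma sum_setI_partition (V : nmodType) (I T : finType) (P : I -> {set T})
    (S : {set T}) (F : T -> V) :
  (forall k l, k != l -> [disjoint P k & P l]) -> \bigcup_k P k = [set: T] ->
  \sum_(i in S) F i = \sum_k \sum_(i in S :&: P k) F i.
Proof.
move=> disjP covP; rewrite -partition_disjoint_bigcup.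
  apply: eq_bigl => i; apply/idP/bigcupP => [iS | [k _]]; last by case/setIP.
  have /bigcupP[k _ ik] : i \in \bigcup_k P k by rewrite covP inE.
  by exists k; rewrite ?inE ?iS.
by move=> k l /disjP; apply: disjointW; apply: subsetIr.
Qed.

Lemma le_cost_at_slower_rate (K : realFieldType) (A am c R r : K) :
  0 < am -> am <= A -> 0 <= c -> 0 < R -> (am + c) / am * R <= r ->
  (A + c) / r <= A / R.
Proof.
move=> am0 amA c0 R0 Rr.
have A0 : 0 < A by exact: lt_le_trans amA.
have r0 : 0 < r by apply: lt_le_trans Rr; rewrite !mulr_gt0 ?invr_gt0 ?ltr_wpDr.
rewrite ler_pdivrMr // mulrAC ler_pdivlMr //.
set q := (am + c) / am in Rr.
have qam : q * am = am + c by rewrite mulfVK ?gt_eqF.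
have ArR : A * (q * R) <= A * r by rewrite ler_pM2l.
have AqR : (A + c) * R <= A * (q * R).
  rewrite mulrA ler_pM2r // -(ler_pM2r am0) -mulrA qam; nra.
exact: le_trans AqR ArR.
Qed.

Section Value.
Variables (K : realFieldType) (T : finType) (U Rt alpha : T -> K) (beta gamma : K).
Local Notation v := (mc_value U Rt alpha beta gamma).

Lemma mc_valueE S : S != set0 ->
  v S = \sum_(i in S) (U i - alpha i / minf Rt S) - (beta + gamma) / minf Rt S.
Proof. by move=> S0; rewrite /mc_value (negbTE S0) sumrB -mulr_suml. Qed.

Lemma mc_value_ge_at_rate (am R : K) S :
  0 < am -> (forall i, am <= alpha i) -> 0 <= beta + gamma -> 0 < R ->
  (S != set0 -> (am + (beta + gamma)) / am * R <= minf Rt S) ->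
  \sum_(i in S) (U i - alpha i / R) <= v S.
Proof.
move=> am0 amle c0 R0; have [-> _|S0 /(_ isT) RS] := eqVneq S set0.
  by rewrite big_set0 /mc_value eqxx.
have [j jS] := set0Pn _ S0.
have amA : am <= \sum_(i in S) alpha i.
  rewrite (bigD1 j) //= -[am]addr0 lerD ?amle //.
  by apply: sumr_ge0 => i _; apply: le_trans (ltW am0) (amle i).
have := le_cost_at_slower_rate am0 amA c0 R0 RS.
rewrite mc_valueE // !sumrB -!mulr_suml mulrDl; lra.
Qed.

End Value.

Section OrderedPartition.
Variables (K : realFieldType) (T : finType) (Rt : T -> K) (rho : K).
Variables (n : nat) (P : 'I_n -> {set T}).
Hypothesis Rt_gt0 : forall i, 0 < Rt i.
Hypothesis rho_gt1 : 1 < rho.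
Hypothesis P_neq0 : forall k, P k != set0.
Hypothesis P_cover : \bigcup_(k < n) P k = [set: T].
Hypothesis P_sorted : forall k l : 'I_n, nat_of_ord l = (nat_of_ord k).+1 ->
  maxf Rt (P k) <= minf Rt (P l).
Hypothesis P_gap : forall k l : 'I_n, nat_of_ord l = (nat_of_ord k).+1 ->
  rho <= minf Rt (P l) / maxf Rt (P k).

Lemma exists_block i : exists k, i \in P k.
Proof.
have /bigcupP[k _ ik] : i \in \bigcup_k P k by rewrite P_cover inE.
by exists k.
Qed.

Lemma maxf_block_gt0 k : 0 < maxf Rt (P k).
Proof. by have [i ik] := set0Pn _ (P_neq0 k); apply: lt_le_trans (le_maxf Rt ik). Qed.

Lemma minf_le_maxf_block k : minf Rt (P k) <= maxf Rt (P k).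
Proof.
by have [i ik] := set0Pn _ (P_neq0 k); rewrite (le_trans (minf_le Rt ik)) ?le_maxf.
Qed.

Lemma gap_blocks (k l : 'I_n) : (k < l)%N -> rho * maxf Rt (P k) <= minf Rt (P l).
Proof.
case: l => l ltln /=; elim: l ltln => [//|l IH] ltln.
rewrite ltnS leq_eqVlt => /predU1P[kl|kl].
  by rewrite -ler_pdivlMr ?maxf_block_gt0 // P_gap //= kl.
apply: le_trans (IH (ltnW ltln) kl) _.
by apply: le_trans (minf_le_maxf_block _) _; apply: P_sorted.
Qed.

Lemma rate_lt_blocks i j (k l : 'I_n) :
  i \in P k -> j \in P l -> (k < l)%N -> Rt i < Rt j.
Proof.
move=> ik jl kl; apply: le_lt_trans (le_maxf Rt ik) _.
apply: lt_le_trans (le_trans (gap_blocks kl) (minf_le Rt jl)).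
by rewrite ltr_pMl ?maxf_block_gt0.
Qed.

Lemma minf_far_block (S : {set T}) i0 k0 k :
  i0 \in S -> i0 \in P k0 -> {in S, forall j, Rt i0 <= Rt j} ->
  k != k0 -> S :&: P k != set0 -> rho * Rt i0 <= minf Rt (S :&: P k).
Proof.
move=> i0S i0k0 i0min kk0 Sk0; have [j /setIP[jS jk]] := set0Pn _ Sk0.
have k0k : (k0 < k)%N.
  rewrite ltn_neqAle eq_sym kk0 leqNgt; apply/negP => /(rate_lt_blocks jk i0k0).
  by rewrite ltNge i0min.
have [j' /setIP[_ j'k] ->] := eq_minf Rt Sk0.
apply: le_trans (le_trans (gap_blocks k0k) (minf_le Rt j'k)).
by rewrite ler_pM2l ?(lt_trans ltr01) ?le_maxf.
Qed.

End OrderedPartition.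

Theorem lemma1 (K : realFieldType) (T : finType)
  (U Rt PRx : T -> K) (PTx a b w X : K)
  (hX : 0 < X) (ha : 0 < a) (hb : 0 < b) (hw : 0 < w) (hPTx : 0 < PTx)
  (hR : forall i, 0 < Rt i) (hPRx : forall i, 0 < PRx i)
  (n : nat) (P : 'I_n -> {set T})
  (hPne : forall k, P k != set0)
  (hPdisj : forall k l, k != l -> [disjoint P k & P l])
  (hPcov : \bigcup_(k < n) P k = [set: T])
  (hPord : forall k l : 'I_n, nat_of_ord l = (nat_of_ord k).+1 ->
             maxf Rt (P k) <= minf Rt (P l))
  (hcond : forall k l : 'I_n, nat_of_ord l = (nat_of_ord k).+1 ->
      minf Rt (P l) / maxf Rt (P k) >=
        (minf (fun i => a * PRx i * X) [set: T] + b * PTx * X + w * X)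
          / minf (fun i => a * PRx i * X) [set: T])
  (S : {set T}) (hS0 : S != set0) (hSinc : forall k, ~~ (S \subset P k)) :
  \sum_(k < n) mc_value U Rt (fun i => a * PRx i * X) (b * PTx * X) (w * X) (S :&: P k)
    >= mc_value U Rt (fun i => a * PRx i * X) (b * PTx * X) (w * X) S.
Proof.
set alpha := fun i => a * PRx i * X; set am := minf alpha [set: T].
set rho := (am + b * PTx * X + w * X) / am.
have [j0 j0S] := set0Pn _ hS0.
have [i0 i0S i0min] : exists2 i0, i0 \in S & {in S, forall j, Rt i0 <= Rt j}.
  by case: (arg_minP Rt j0S) => i0; exists i0.
have [k0 i0k0] := exists_block hPcov i0.
have setT_neq0 : [set: T] != set0 by apply/set0Pn; exists i0.
have am0 : 0 < am by rewrite /am; have [i _ ->] := eq_minf alpha setT_neq0; rewrite !mulr_gt0.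
have c0 : 0 < b * PTx * X + w * X by rewrite addr_gt0 ?mulr_gt0.
have rho_gt1 : 1 < rho by rewrite ltr_pdivlMr // mul1r -addrA ltrDl.
have i0Sk0 : i0 \in S :&: P k0 by apply/setIP.
have Sk0 : S :&: P k0 != set0 by apply/set0Pn; exists i0.
have Rk0 : minf Rt (S :&: P k0) = Rt i0.
  by apply: minf_eq => // j /setIP[jS _]; apply: i0min.
rewrite mc_valueE // (minf_eq i0S i0min) (sum_setI_partition _ _ hPdisj hPcov).
rewrite (bigD1 k0) //= [leRHS](bigD1 k0) //= mc_valueE // Rk0 addrAC lerD2l.
apply: ler_sum => k kk0.
apply: (mc_value_ge_at_rate _ am0) => [i||//|Sk]; first exact: minf_le (in_setT i).
  exact: ltW.
rewrite addrA.
exact: (minf_far_block (P := P) hR rho_gt1 hPne hPord hcond i0S i0k0 i0min kk0 Sk).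
Qed.
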